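(* Let $(\mathcal U,\mathcal F)$ be a strongly accessible set system and $S$ a nonempty maximal solution with canonical order $s_1,\dots,s_{|S|}$. Let $j$ be the smallest index such that $\mathrm{complete}(S[j])=S$, and suppose $j>1$. Put $\mathrm{pi}(S)=s_j$, $\mathrm{core}(S)=S[j-1]$, $\mathrm{parent}(S)=\mathrm{complete}(\mathrm{core}(S))$. Then $\mathrm{parent}(S)$ is a maximal solution with $\mathrm{parent}(S)\prec S$ (in particular $\mathrm{parent}(S)\neq S$), $\mathrm{core}(S)\subseteq \mathrm{parent}(S)$, $\mathrm{pi}(S)\notin\mathrm{core}(S)$, $\mathrm{core}(S)\cup\{\mathrm{pi}(S)\}\in\mathcal F$, and $S=\mathrm{complete}(\mathrm{core}(S)\cup\{\mathrm{pi}(S)\})$.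
   Context: A set system is a pair $(\mathcal U,\mathcal F)$ with $\mathcal U$ finite, $\mathcal F\subseteq 2^{\mathcal U}$, $\emptyset\in\mathcal F$; $S\in\mathcal F$ is maximal if there is no $Y\in\mathcal F$ with $S\subsetneq Y$. Strongly accessible: for all $X,Y\in\mathcal F$ with $X\subsetneq Y$ there is $z\in Y\setminus X$ with $X\cup\{z\}\in\mathcal F$. Elements of $\mathcal U$ are identified with distinct integers. For $X,A\subseteq\mathcal U$, $X^+_A=\{a\in A\setminus X: X\cup\{a\}\in\mathcal F\}$. $Z=\{x\in\mathcal U:\{x\}\in\mathcal F\}$, $\mathrm{source}(X)=\min(X\cap Z)$. For $X\in\mathcal F$ and $A\subseteq\mathcal U$, $\mathrm{complete}(X,A)$ is obtained by repeatedly replacing $X$ with $X\cup\{\min X^+_A\}$ while $X^+_A\neq\emptyset$, then returning $X$; $\mathrm{complete}(X)=\mathrm{complete}(X,\mathcal U)$. The canonical order of a nonempty maximal solution $S$ is $s_1=\mathrm{source}(S)$ and $s_{i+1}=\min S[i]^+_S$ while this set is nonempty, with $S[i]=\{s_1,\dots,s_i\}$. For maximal solutions $S\ne T$ with canonical orders $(s_i)$, $(t_i)$, let $i$ be the smallest index with $s_i\neq t_i$; $S\prec T$ iff $s_i<t_i$. *)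

From HB Require Import structures.
From mathcomp Require Import all_boot all_order.
Set Implicit Arguments. Unset Strict Implicit. Unset Printing Implicit Defensive.
Import Order.TTheory.
Local Open Scope order_scope.

(* The universe U is a finite totally ordered type T (elements identified
   with distinct integers, compared by their order); U = [set: T]. *)

Section SetSystems.
Context {d : Order.disp_t} {T : finOrderType d}.
Implicit Types (F : {set {set T}}) (X Y A S : {set T}).

Definition set_system F : Prop := set0 \in F.

Definition maximal F S : Prop :=
  S \in F /\ forall Y, Y \in F -> ~ (S \proper Y).

Definition strongly_accessible F : Prop :=
  forall X Y, X \in F -> Y \in F -> X \proper Y ->
    exists2 z, z \in Y :\: X & X :|: [set z] \in F.

Definition plus F X A : {set T} := [set a in A :\: X | X :|: [set a] \in F].

Definition smin A : option T := [pick x in A | [forall y in A, x <= y]].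

Definition Zset F : {set T} := [set x | [set x] \in F].
Definition source F X : option T := smin (X :&: Zset F).

(* complete(X, A): repeatedly add min X^+_A while nonempty.  Each step adds
   a new element, so #|T| iterations reach the fixpoint. *)
Definition complete_step F A X : {set T} :=
  match smin (plus F X A) with Some a => X :|: [set a] | None => X end.
Definition complete_in F X A : {set T} := iter #|T| (complete_step F A) X.
Definition complete F X : {set T} := complete_in F X setT.

Fixpoint canon_aux F S (n : nat) (X : {set T}) : seq T :=
  match n with
  | 0 => [::]
  | n'.+1 => match smin (plus F X S) with
             | Some a => a :: canon_aux F S n' (X :|: [set a])
             | None => [::]
             end
  end.
Definition canon F S : seq T :=
  match source F S with
  | Some s1 => s1 :: canon_aux F S #|T| [set s1]
  | None => [::]
  end.

Definition prefix_set F S (i : nat) : {set T} := [set x in take i (canon F S)].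

(* S ≺ T' : first differing index i (0-based here) has s_i < t_i *)
Definition prec F S S' : Prop :=
  S != S' /\
  exists (i : nat) (a b : T),
    [/\ onth (canon F S) i = Some a, onth (canon F S') i = Some b,
        take i (canon F S) = take i (canon F S') & a < b].
End SetSystems.

(* Let core = S[j-1], p = s_j and m the least element extending core.  If
   m = p, then complete(core) = complete(S[j]) = S, against the minimality of
   j; hence m < p.  Since parent = complete(core) contains core, at every
   step of its canonical order the next element of S is still a candidate, so
   the canonical order of parent either undercuts that of S early or follows
   it through core and then picks an element at most m < p: parent < S. *)

From mathcomp Require Import all_boot all_order.
Import Order.TTheory.

Set Implicit Arguments. Unset Strict Implicit. Unset Printing Implicit Defensive.

Lemma onth_lt_size {U : Type} (s : seq U) i :
  (i < size s)%N -> exists a, onth s i = Some a.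
Proof. by rewrite -onthTE; case: onth => // a _; exists a. Qed.

Lemma take_onth {U : Type} (s : seq U) i a :
  onth s i = Some a -> take i.+1 s = rcons (take i s) a.
Proof.
move=> sia; have lt_i_s : (i < size s)%N by rewrite -onthTE sia.
by rewrite (take_nth a lt_i_s) (onth_nth a a s i sia).
Qed.

Lemma mem_take_onth {U : eqType} (s : seq U) i n a :
  onth s i = Some a -> (i < n)%N -> a \in take n s.
Proof.
move=> sia lt_in; have lt_i_s : (i < size s)%N by rewrite -onthTE sia.
rewrite -(onth_nth a a s i sia) -(nth_take a lt_in) mem_nth // size_take.
by case: ifP.
Qed.

Section CanonicalOrder.
Local Open Scope order_scope.
Context {d : Order.disp_t} {T : finOrderType d}.
Implicit Types (F : {set {set T}}) (A G P X : {set T}).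

Lemma smin_some A a : smin A = Some a -> a \in A /\ {in A, forall y, a <= y}.
Proof. by rewrite /smin; case: pickP => // x /andP[xA /forall_inP xmin] [<-]. Qed.

Lemma smin_le A y : y \in A -> exists2 a, smin A = Some a & a <= y.
Proof.
move=> yA; case Emin: (smin A) => [a|]; first by exists a => //; apply: (smin_some Emin).2.
move: Emin; rewrite /smin; case: pickP => // no_min _.
have [m mA m_min] := arg_minP (fun x => x) yA.
have m_least : [forall z in A, m <= z] by apply/forall_inP.
by have := no_min m; rewrite /= (mA : m \in A) m_least.
Qed.

Lemma in_plus F X A a :
  (a \in plus F X A) = [&& a \in A, a \notin X & X :|: [set a] \in F].
Proof. by rewrite !inE [_ && (a \in A)]andbC -andbA. Qed.

Lemma plus_setT F A : plus F setT A = set0.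
Proof. by apply/setP => a; rewrite in_plus !inE andbF. Qed.

Lemma subset_complete_step F A X : X \subset complete_step F A X.
Proof. by rewrite /complete_step; case: smin => // a; apply: subsetUl. Qed.

Lemma complete_step_mem F A X : X \in F -> complete_step F A X \in F.
Proof.
rewrite /complete_step; case Emin: smin => [a|] // _.
by have [/[!in_plus]/and3P[]] := smin_some Emin.
Qed.

Lemma complete_step_fixE F A X :
  (complete_step F A X == X) = (plus F X A == set0).
Proof.
rewrite /complete_step; case Emin: smin => [a|]; last first.
  rewrite eqxx; apply/esym/eqP/setP => y; rewrite [RHS]inE.
  by apply/negP => /smin_le[a]; rewrite Emin.
have [aplus _] := smin_some Emin; have := aplus; rewrite in_plus => /and3P[_ aX _].
have /negbTE-> : plus F X A != set0 by apply/set0Pn; exists a.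
by apply/negbTE/negP => /eqP/setP/(_ a); rewrite !inE eqxx orbT (negbTE aX).
Qed.

Lemma card_complete_step F A X :
  complete_step F A X != X -> #|complete_step F A X| = #|X|.+1.
Proof.
rewrite /complete_step; case Emin: smin => [a|]; last by rewrite eqxx.
have [/[!in_plus]/and3P[_ aX _] _] := smin_some Emin.
by rewrite setUC cardsU1 aX.
Qed.

(* Each non-stationary step adds an element, so #|T| steps reach a fixpoint. *)
Lemma plus_complete_in F X A : plus F (complete_in F X A) A = set0.
Proof.
set f := complete_step F A.
have grow n : f (iter n f X) = iter n f X \/ (n <= #|iter n f X|)%N.
  elim: n => [|n [fixed|IH]]; first by right.
    by left; rewrite /= !fixed.
  have [fixed|moved] := eqVneq (f (iter n f X)) (iter n f X).
    by left; rewrite /= !fixed.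
  by right; rewrite /= card_complete_step.
apply/eqP; have [fixed|full] := grow #|T|.
  by rewrite -complete_step_fixE; apply/eqP; exact: fixed.
suff -> : complete_in F X A = setT by rewrite plus_setT.
by apply/eqP; rewrite eqEcard subsetT cardsT.
Qed.

Lemma complete_in_step F X A :
  complete_in F (complete_step F A X) A = complete_in F X A.
Proof.
rewrite /complete_in -iterSr iterS; apply/eqP.
by rewrite complete_step_fixE plus_complete_in.
Qed.

Lemma complete_in_add_min F X A a :
  smin (plus F X A) = Some a -> complete_in F (X :|: [set a]) A = complete_in F X A.
Proof. by move=> Emin; rewrite -[RHS]complete_in_step /complete_step Emin. Qed.

Lemma subset_complete_in F X A : X \subset complete_in F X A.
Proof.
rewrite /complete_in; elim: #|T| => //= n IH.
exact: subset_trans IH (subset_complete_step _ _ _).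
Qed.

Lemma complete_in_mem F X A : X \in F -> complete_in F X A \in F.
Proof. by move=> XF; rewrite /complete_in; elim: #|T| => //= n; apply: complete_step_mem. Qed.

Lemma maximal_complete F X :
  strongly_accessible F -> X \in F -> maximal F (complete F X).
Proof.
move=> accF XF; have CF := complete_in_mem setT XF; split=> // Y YF ltCY.
have [z /setDP[_ zC] zF] := accF _ _ CF YF ltCY.
have : z \in plus F (complete F X) setT by rewrite in_plus inE zC zF.
by rewrite /complete plus_complete_in inE.
Qed.

Lemma size_canon F G : (size (canon F G) <= #|T|.+1)%N.
Proof.
rewrite /canon; case: source => //= s1; rewrite ltnS.
elim: #|T| [set s1] => //= n IH X.
by case: smin => //= a; rewrite ltnS.
Qed.

(* For [i = 0] the extensions of [set0] in [G] are [G :&: Zset F], so the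
   source is covered as well; the bound [i <= #|T|] comes from the fuel of
   [canon_aux]. *)
Lemma onth_canon F G i :
  (i <= #|T|)%N -> (i <= size (canon F G))%N ->
  onth (canon F G) i = smin (plus F (prefix_set F G i) G).
Proof.
have plus0 : plus F set0 G = G :&: Zset F.
  by apply/setP => y; rewrite in_plus !inE set0U andbC.
rewrite /prefix_set /canon; case Esrc: source => [s1|]; last first.
  by case: i => // _ _; rewrite set_nil plus0.
case: i => [_ _|i]; first by rewrite set_nil plus0.
rewrite /= !ltnS => le_iT.
have aux n X j : (j < n)%N -> (j <= size (canon_aux F G n X))%N ->
    onth (canon_aux F G n X) j
    = smin (plus F (X :|: [set x in take j (canon_aux F G n X)]) G).
  elim: n X j => // n IH X j lt_jn /=.
  case Emin: smin => [a|]; last by case: j lt_jn => // _ _; rewrite set_nil setU0.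
  case: j lt_jn => [_ _|j]; first by rewrite set_nil setU0.
  rewrite !ltnS => lt_jn le_j /=; rewrite IH // set_cons setUA.
  by congr (smin (plus F (_ :|: _) G)); apply/setP => y; rewrite !inE.
by move=> le_i; rewrite aux // set_cons.
Qed.

Lemma onth_canon_plus F G i a :
  onth (canon F G) i = Some a -> a \in plus F (prefix_set F G i) G.
Proof.
move=> Gia; have lt_iG : (i < size (canon F G))%N by rewrite -onthTE Gia.
have le_iT : (i <= #|T|)%N by rewrite -ltnS (leq_trans lt_iG) ?size_canon.
by move: Gia; rewrite onth_canon ?(ltnW lt_iG) // => /smin_some[].
Qed.

Lemma prefix_setS F G i a :
  onth (canon F G) i = Some a -> prefix_set F G i.+1 = prefix_set F G i :|: [set a].
Proof.
move=> Gia; rewrite /prefix_set (take_onth Gia).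
by apply/setP => y; rewrite !inE mem_rcons inE orbC.
Qed.

Lemma prefix_set_mem F G i :
  (i < size (canon F G))%N -> prefix_set F G i.+1 \in F.
Proof.
move=> /onth_lt_size[a Gia]; rewrite (prefix_setS Gia).
by have /[!in_plus]/and3P[] := onth_canon_plus Gia.
Qed.

Definition lex_lt (s t : seq T) : Prop :=
  exists i a b, [/\ onth s i = Some a, onth t i = Some b, take i s = take i t & a < b].

Lemma onth_canon_le F G P i y :
  take i (canon F P) = take i (canon F G) -> (i < size (canon F G))%N ->
  y \in plus F (prefix_set F G i) P -> exists2 a, onth (canon F P) i = Some a & a <= y.
Proof.
move=> eq_take lt_iG yP.
have le_iP : (i <= size (canon F P))%N.
  move: (congr1 size eq_take); rewrite !size_take lt_iG.
  by case: ltnP => [lt_iP _|_ ->] //; apply: ltnW.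
have le_iT : (i <= #|T|)%N by rewrite -ltnS (leq_trans lt_iG) ?size_canon.
by rewrite onth_canon // /prefix_set eq_take; apply: smin_le.
Qed.

Lemma lex_lt_canon F G P n y b :
  onth (canon F G) n = Some b -> prefix_set F G n \subset P ->
  y \in plus F (prefix_set F G n) P -> y < b -> lex_lt (canon F P) (canon F G).
Proof.
move=> Gnb subP yP lt_yb; have lt_nG : (n < size (canon F G))%N by rewrite -onthTE Gnb.
have agree i : (i <= n)%N ->
    lex_lt (canon F P) (canon F G) \/ take i (canon F P) = take i (canon F G).
  elim: i => [|i IH] le_in; first by right; rewrite !take0.
  have [//|eq_take] := IH (ltnW le_in); first by left.
  have lt_iG : (i < size (canon F G))%N := ltn_trans le_in lt_nG.
  have [c Gic] := onth_lt_size lt_iG.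
  have cP : c \in plus F (prefix_set F G i) P.
    have /[!in_plus]/and3P[_ -> ->] := onth_canon_plus Gic.
    by rewrite (subsetP subP) // inE (mem_take_onth Gic).
  have [a Pia] := onth_canon_le eq_take lt_iG cP.
  rewrite le_eqVlt => /predU1P[eq_ac|lt_ac]; last by left; exists i, a, c.
  by right; rewrite (take_onth Pia) (take_onth Gic) eq_take eq_ac.
have [//|eq_take] := agree n (leqnn n).
have [a Pna le_ay] := onth_canon_le eq_take lt_nG yP.
by exists n, a, b; split=> //; apply: le_lt_trans lt_yb.
Qed.

End CanonicalOrder.

Theorem mainTheorem4 (d : Order.disp_t) (T : finOrderType d)
    (F : {set {set T}}) (S : {set T}) (j : nat) :
  set_system F ->
  strongly_accessible F ->
  maximal F S ->
  S != set0 ->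
  (1 <= j <= #|S|)%N ->
  complete F (prefix_set F S j) = S ->
  (forall k : nat, (1 <= k < j)%N -> complete F (prefix_set F S k) != S) ->
  (1 < j)%N ->
  exists p : T,
    let core := prefix_set F S j.-1 in
    let parent := complete F core in
    onth (canon F S) j.-1 = Some p /\
    maximal F parent /\
    prec F parent S /\
    parent != S /\
    core \subset parent /\
    p \notin core /\
    core :|: [set p] \in F /\
    S = complete F (core :|: [set p]).
Proof.
move=> _ accF _ _ _; case: j => [|[|k]] // S_complete S_minimal _ /=.
set core := prefix_set F S k.+1; set parent := complete F core.
have parent_neq : parent != S by apply: S_minimal; rewrite ltnSn.
have lt_kS : (k.+1 < size (canon F S))%N.
  rewrite ltnNge; apply: contra parent_neq => short; apply/eqP.
  by rewrite -S_complete /parent /core /prefix_set !take_oversize ?(leqW short).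
have [p Sp] := onth_lt_size lt_kS.
have S_eq : S = complete F (core :|: [set p]) by rewrite -(prefix_setS Sp).
have := onth_canon_plus Sp; rewrite in_plus => /and3P[_ p_notin_core coreUp_mem].
have core_sub : core \subset parent := subset_complete_in _ _ _.
have [m min_m le_mp] : exists2 m, smin (plus F core setT) = Some m & (m <= p)%O.
  by apply: smin_le; rewrite in_plus inE p_notin_core coreUp_mem.
have parent_eq : parent = complete F (core :|: [set m]).
  by rewrite /complete complete_in_add_min.
have lt_mp : (m < p)%O.
  rewrite lt_neqAle le_mp andbT; apply: contraNneq parent_neq => eq_mp.
  by rewrite S_eq parent_eq eq_mp.
have m_plus : m \in plus F core parent.
  have [+ _] := smin_some min_m; rewrite !in_plus => /and3P[_ -> ->].
  by rewrite !andbT parent_eq (subsetP (subset_complete_in _ _ _)) // !inE eqxx orbT.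
have parent_max : maximal F parent.
  exact: maximal_complete accF (prefix_set_mem (ltnW lt_kS)).
have parent_prec : prec F parent S.
  by split=> //; apply: lex_lt_canon Sp core_sub m_plus lt_mp.
by exists p; do 7!(split; first done).
Qed.
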